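(* For all integers $k\ge1$ and generic $a,b,c,d$, the polynomials $$Q_k^{(2)}(n;a;b,c,d)=\sum_{j=0}^k\frac{(-n)_j(n+a)_j(-k)_j(k-1-a+b+c+d)_j}{j!(b)_j(c)_j(d)_j}$$ satisfy $$abcd\,\frac{n+\frac a2}{\frac a2}\,Q_k^{(2)}(n;a;b,c,d)=(n+a)(n+b)(n+c)(n+d)\,Q_{k-1}^{(2)}(n;a+1;b+1,c+1,d+1)$$ $$\qquad-n(n+a-b)(n+a-c)(n+a-d)\,Q_{k-1}^{(2)}(n-1;a+1;b+1,c+1,d+1).$$
   Context: $(c)_n$ denotes the Pochhammer symbol, $(c)_0=1$. *)

From HB Require Import structures.
From mathcomp Require Import all_boot all_order all_algebra.
Set Implicit Arguments. Unset Strict Implicit. Unset Printing Implicit Defensive.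
Import Order.TTheory GRing.Theory Num.Theory.
Local Open Scope ring_scope.

Definition poch (R : ringType) (c : R) (m : nat) : R :=
  \prod_(i < m) (c + i%:R).

Definition Q2 (R : fieldType) (k : nat) (n a b c d : R) : R :=
  \sum_(j < k.+1)
    (poch (- n) j * poch (n + a) j * poch (- k%:R) j
       * poch (k%:R - 1 - a + b + c + d) j)
    / ((j`!)%:R * poch b j * poch c j * poch d j).

From HB Require Import structures.
From mathcomp Require Import all_boot all_order all_algebra.
From mathcomp Require Import ring.
Set Implicit Arguments.
Unset Strict Implicit.
Unset Printing Implicit Defensive.
Import Order.TTheory GRing.Theory Num.Theory.
Local Open Scope ring_scope.

(* Expand Q_k(n) in the basis phi_j(n) = (-n)_j (n+a)_j with coefficients t_j.
   The difference operator on the right-hand side maps phi_j(.; a+1) to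
   (2n+a) (u_j phi_j + v_j phi_{j+1}) for explicit u_j, v_j not depending on n,
   so comparing coefficients of phi_j reduces the theorem to the two-term
   relation  b c d t_j = t'_j u_j + t'_{j-1} v_{j-1}  between the coefficients
   t' of Q_{k-1} with shifted parameters (with t'_k = 0, as (1-k)_k = 0),
   which is a rational identity. *)

Lemma sumr_shift (R : nmodType) (X Y : nat -> R) m : X m.+1 = 0 ->
  X 0%N + \sum_(j < m.+1) (X j.+1 + Y j) = \sum_(j < m.+1) (X j + Y j).
Proof.
move=> Xm_eq0; rewrite !big_split /= addrA; congr (_ + _).
by rewrite big_ord_recr /= Xm_eq0 addr0 [RHS]big_ord_recl.
Qed.

Section Pochhammer.
Variable R : nzRingType.
Implicit Types x : R.

Lemma poch0 x : poch x 0 = 1.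
Proof. by rewrite /poch big_ord0. Qed.

Lemma pochSr x j : poch x j.+1 = poch x j * (x + j%:R).
Proof. by rewrite /poch big_ord_recr. Qed.

Lemma pochSl x j : poch x j.+1 = x * poch (x + 1) j.
Proof.
rewrite /poch big_ord_recl /= addr0; congr (_ * _).
by apply: eq_bigr => i _; rewrite /bump leq0n add1n -addn1 natrD addrA addrAC.
Qed.

Lemma poch_Nnat_eq0 k : poch (- k%:R : R) k.+1 = 0.
Proof. by rewrite pochSr addNr mulr0. Qed.

End Pochhammer.

Definition Q2_basis (R : nzRingType) (n a : R) (j : nat) : R :=
  poch (- n) j * poch (n + a) j.

Definition Q2_coef (R : fieldType) (k : nat) (a b c d : R) (j : nat) : R :=
  poch (- k%:R) j * poch (k%:R - 1 - a + b + c + d) j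
  / ((j`!)%:R * poch b j * poch c j * poch d j).

Lemma Q2E (R : fieldType) k (n a b c d : R) :
  Q2 k n a b c d = \sum_(j < k.+1) Q2_basis n a j * Q2_coef k a b c d j.
Proof. by apply: eq_bigr => j _; rewrite /Q2_basis /Q2_coef -!mulrA. Qed.

Section Coefficients.
Variables (R : fieldType) (a b c d : R).

Lemma Q2_coef0 k : Q2_coef k a b c d 0 = 1.
Proof. by rewrite /Q2_coef !poch0 !mulr1 divr1. Qed.

Lemma Q2_coef_top k : Q2_coef k a b c d k.+1 = 0.
Proof. by rewrite /Q2_coef poch_Nnat_eq0 !mul0r. Qed.

Lemma Q2_coefSr k j :
  Q2_coef k a b c d j.+1 = Q2_coef k a b c d j *
    ((- k%:R + j%:R) * (k%:R - 1 - a + b + c + d + j%:R)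
     / ((j.+1)%:R * (b + j%:R) * (c + j%:R) * (d + j%:R))).
Proof. by rewrite /Q2_coef !pochSr factS natrM !invfM; ring. Qed.

Lemma Q2_coefSS k j :
  Q2_coef k.+1 a b c d j.+1 =
    - (k.+1)%:R * (k.+1%:R - 1 - a + b + c + d) / ((j.+1)%:R * b * c * d)
    * Q2_coef k (a + 1) (b + 1) (c + 1) (d + 1) j.
Proof.
rewrite /Q2_coef (pochSl (- _)) (pochSl (_ - 1 - a + b + c + d)) (pochSl b)
  (pochSl c) (pochSl d) factS natrM.
have -> : - (k.+1)%:R + 1 = - k%:R :> R by rewrite mulrS; ring.
have -> : k.+1%:R - 1 - a + b + c + d + 1
   = k%:R - 1 - (a + 1) + (b + 1) + (c + 1) + (d + 1) :> R by rewrite mulrS; ring.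
by rewrite !invfM; ring.
Qed.

End Coefficients.

Definition contig_v (R : fieldType) (a b c d : R) (j : nat) : R :=
  a - (b + c + d) - j%:R.

Definition contig_u (R : fieldType) (a b c d : R) (j : nat) : R :=
  (b * c * d * (a + j%:R) + (a - b) * (a - c) * (a - d) * j%:R) / a
  - contig_v a b c d j * j%:R * (a + j%:R).

Lemma contig_u0 (R : fieldType) (a b c d : R) :
  a != 0 -> contig_u a b c d 0 = b * c * d.
Proof. by move=> a_neq0; rewrite /contig_u !mulr0n !(mulr0, mul0r, addr0, subr0) mulfK. Qed.

Lemma Q2_basis_contiguous (R : fieldType) (n a b c d : R) j : a != 0 ->
  (n + a) * (n + b) * (n + c) * (n + d) * Q2_basis n (a + 1) j
  - n * (n + a - b) * (n + a - c) * (n + a - d) * Q2_basis (n - 1) (a + 1) j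
  = (2%:R * n + a) * (contig_u a b c d j * Q2_basis n a j
                      + contig_v a b c d j * Q2_basis n a j.+1).
Proof.
move=> a_neq0; rewrite /Q2_basis /contig_u /contig_v.
case: j => [|j]; first by rewrite !poch0 /poch !big_ord1 /=; field.
set P := poch (- n + 1) j; set Q := poch (n + (a + 1)) j.
have NnS : poch (- n) j.+1 = - n * P by rewrite pochSl.
have NnSS : poch (- n) j.+2 = - n * (P * (- n + 1 + j%:R)).
  by rewrite pochSl pochSr.
have NnS' : poch (- (n - 1)) j.+1 = P * (- n + 1 + j%:R).
  by rewrite pochSr opprB addrC.
have naS : poch (n + a) j.+1 = (n + a) * Q by rewrite pochSl -addrA.
have naSS : poch (n + a) j.+2 = (n + a) * (Q * (n + (a + 1) + j%:R)).
  by rewrite pochSl pochSr -addrA.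
have na1S : poch (n + (a + 1)) j.+1 = Q * (n + (a + 1) + j%:R) by rewrite pochSr.
have na1S' : poch (n - 1 + (a + 1)) j.+1 = (n + a) * Q.
  by rewrite pochSl; congr (_ * poch _ _); ring.
by rewrite NnS NnSS NnS' naS naSS na1S na1S' -addn1 natrD; field.
Qed.

Section Contiguity.
Variables (R : fieldType) (k : nat) (a b c d : R).
Hypothesis hchar : [pchar R] =i pred0.
Hypothesis a_neq0 : a != 0.
Hypothesis hb : forall i : nat, (i < k.+1)%N -> b + i%:R != 0.
Hypothesis hc : forall i : nat, (i < k.+1)%N -> c + i%:R != 0.
Hypothesis hd : forall i : nat, (i < k.+1)%N -> d + i%:R != 0.

Lemma Q2_coef_contiguous j : (j <= k)%N ->
  b * c * d * Q2_coef k.+1 a b c d j.+1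
  = Q2_coef k (a + 1) (b + 1) (c + 1) (d + 1) j.+1 * contig_u a b c d j.+1
    + Q2_coef k (a + 1) (b + 1) (c + 1) (d + 1) j * contig_v a b c d j.
Proof.
have natr_neq0 i : i.+1%:R != 0 :> R by rewrite (pcharf0P R).1.
have b_neq0 : b != 0 by move: (@hb 0%N isT); rewrite addr0.
have c_neq0 : c != 0 by move: (@hc 0%N isT); rewrite addr0.
have d_neq0 : d != 0 by move: (@hd 0%N isT); rewrite addr0.
rewrite Q2_coefSS leq_eqVlt => /predU1P[-> | lt_jk].
  rewrite Q2_coef_top mul0r add0r /contig_v; field.
  by rewrite b_neq0 c_neq0 d_neq0 -mulrS natr_neq0.
have shift_neq0 (x : R) : (forall i, (i < k.+1)%N -> x + i%:R != 0) -> x + 1 + j%:R != 0.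
  by move=> hx; rewrite -addrA -mulrS hx.
rewrite Q2_coefSr /contig_u /contig_v; field.
by rewrite a_neq0 !shift_neq0 // -mulrS natr_neq0 b_neq0 c_neq0 d_neq0.
Qed.

Lemma Q2_coef_sum_contiguous (phi : nat -> R) :
  b * c * d * \sum_(j < k.+2) phi j * Q2_coef k.+1 a b c d j
  = \sum_(j < k.+1) Q2_coef k (a + 1) (b + 1) (c + 1) (d + 1) j
       * (contig_u a b c d j * phi j + contig_v a b c d j * phi j.+1).
Proof.
set T := Q2_coef k (a + 1) (b + 1) (c + 1) (d + 1).
set u := contig_u a b c d; set v := contig_v a b c d.
pose X j := T j * u j * phi j; pose Y j := T j * v j * phi j.+1.
rewrite [RHS](eq_bigr (fun j : 'I_k.+1 => X j + Y j)) => [|j _]; last first.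
  by rewrite /X /Y mulrDr !mulrA.
rewrite -sumr_shift; last by rewrite /X /T Q2_coef_top !mul0r.
rewrite mulr_sumr big_ord_recl; congr (_ + _).
  by rewrite /X /T /u !Q2_coef0 contig_u0 // mulr1 mul1r mulrC.
apply: eq_bigr => j _ /=.
by rewrite mulrCA (Q2_coef_contiguous (ltn_ord j)) mulrDr
  !(mulrC (phi _)).
Qed.

End Contiguity.

Theorem mainTheorem16 (R : fieldType) (hchar : [pchar R] =i pred0)
  (k : nat) (hk : (1 <= k)%N) (n a b c d : R)
  (ha : a != 0)
  (hb : forall j : nat, (j < k)%N -> b + j%:R != 0)
  (hc : forall j : nat, (j < k)%N -> c + j%:R != 0)
  (hd : forall j : nat, (j < k)%N -> d + j%:R != 0) :
  a * b * c * d * ((n + a / 2) / (a / 2)) * Q2 k n a b c d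
  = (n + a) * (n + b) * (n + c) * (n + d)
      * Q2 k.-1 n (a + 1) (b + 1) (c + 1) (d + 1)
    - n * (n + a - b) * (n + a - c) * (n + a - d)
      * Q2 k.-1 (n - 1) (a + 1) (b + 1) (c + 1) (d + 1).
Proof.
case: k hk hb hc hd => [//|k] _ hb hc hd /=.
have two_neq0 : 2%:R != 0 :> R by rewrite (pcharf0P R).1.
have -> : a * b * c * d * ((n + a / 2) / (a / 2)) = (2%:R * n + a) * (b * c * d).
  by field; rewrite ha two_neq0.
rewrite !Q2E [in RHS]mulr_sumr [in RHS]mulr_sumr -sumrB.
under [in RHS]eq_bigr => j _ do rewrite [X in X - _]mulrA [X in _ - X]mulrA
  -mulrBl Q2_basis_contiguous // mulrAC -mulrA.
by rewrite -mulr_sumr -mulrA Q2_coef_sum_contiguous.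
Qed.
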